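(* A group $G$ is unfactorizable if and only if $G$ is centerless and indecomposable.
   Context: A group $G$ is called unfactorizable if whenever $G=HK$ for subgroups $H,K\le G$ satisfying $hk=kh$ for all $h\in H$, $k\in K$, we have $H=1$ or $K=1$. $G$ is indecomposable if $G\cong H\times K$ implies that $H$ or $K$ is trivial. $G$ is centerless if its center is trivial. *)

Record group := Group {
  carrier :> Type;
  gmul : carrier -> carrier -> carrier;
  gone : carrier;
  ginv : carrier -> carrier;
  gmulA : forall x y z, gmul x (gmul y z) = gmul (gmul x y) z;
  gmul1l : forall x, gmul gone x = x;
  gmul1r : forall x, gmul x gone = x;
  gmulVl : forall x, gmul (ginv x) x = gone;
  gmulVr : forall x, gmul x (ginv x) = gone
}.

Arguments gmul {g} _ _.
Arguments gone {g}.
Arguments ginv {g} _.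

Definition is_subgroup (G : group) (H : G -> Prop) : Prop :=
  H gone /\ (forall x y, H x -> H y -> H (gmul x y)) /\ (forall x, H x -> H (ginv x)).

Definition trivial_subgroup (G : group) (H : G -> Prop) : Prop :=
  forall x, H x -> x = gone.

Definition trivial_group (G : group) : Prop := forall x : G, x = gone.

Definition unfactorizable (G : group) : Prop :=
  forall H K : G -> Prop, is_subgroup G H -> is_subgroup G K ->
    (forall g : G, exists h k, H h /\ K k /\ g = gmul h k) ->
    (forall h k, H h -> K k -> gmul h k = gmul k h) ->
    trivial_subgroup G H \/ trivial_subgroup G K.

Definition centerless (G : group) : Prop :=
  forall z : G, (forall g : G, gmul z g = gmul g z) -> z = gone.

Section Prod.
Variables H K : group.
Definition pmul (x y : H * K) : H * K := (gmul (fst x) (fst y), gmul (snd x) (snd y)).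
Definition pone : H * K := (gone, gone).
Definition pinv (x : H * K) : H * K := (ginv (fst x), ginv (snd x)).
Lemma pmulA x y z : pmul x (pmul y z) = pmul (pmul x y) z.
Proof. destruct x, y, z; unfold pmul; simpl; rewrite !gmulA; reflexivity. Qed.
Lemma pmul1l x : pmul pone x = x.
Proof. destruct x; unfold pmul, pone; simpl; rewrite !gmul1l; reflexivity. Qed.
Lemma pmul1r x : pmul x pone = x.
Proof. destruct x; unfold pmul, pone; simpl; rewrite !gmul1r; reflexivity. Qed.
Lemma pmulVl x : pmul (pinv x) x = pone.
Proof. destruct x; unfold pmul, pinv, pone; simpl; rewrite !gmulVl; reflexivity. Qed.
Lemma pmulVr x : pmul x (pinv x) = pone.
Proof. destruct x; unfold pmul, pinv, pone; simpl; rewrite !gmulVr; reflexivity. Qed.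
Definition prod_group : group :=
  Group (H * K) pmul pone pinv pmulA pmul1l pmul1r pmulVl pmulVr.
End Prod.

Definition isomorphic (G G' : group) : Prop :=
  exists f : G -> G',
    (forall x y, f (gmul x y) = gmul (f x) (f y)) /\
    (forall x y, f x = f y -> x = y) /\
    (forall y, exists x, f x = y).

Definition indecomposable (G : group) : Prop :=
  forall H K : group, isomorphic G (prod_group H K) ->
    trivial_group H \/ trivial_group K.

(** The center [Z] and the whole group commute elementwise and [G = Z G], so an
    unfactorizable group is centerless; an isomorphism [G ≅ H × K] pulls back
    [H × 1] and [1 × K] to commuting subgroups with product [G], so it is also
    indecomposable.  Conversely, if [G = H K] with [H], [K] commuting, then
    [H ∩ K] is central, hence trivial when [G] is centerless; the factorization
    [g = h k] is then unique and [(h, k) ↦ h k] is an isomorphism [H × K ≅ G],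
    so indecomposability forces [H] or [K] to be trivial. *)

From Stdlib Require Import ClassicalEpsilon ProofIrrelevance.

Section GroupLaws.
Variable G : group.
Implicit Types a b x y : G.

Lemma mul_left_cancel a x y : gmul a x = gmul a y -> x = y.
Proof.
  intro E.
  rewrite <- (gmul1l _ x), <- (gmul1l _ y), <- (gmulVl _ a), <- !gmulA, E.
  reflexivity.
Qed.

Lemma mul_right_cancel a x y : gmul x a = gmul y a -> x = y.
Proof.
  intro E.
  rewrite <- (gmul1r _ x), <- (gmul1r _ y), <- (gmulVr _ a), !gmulA, E.
  reflexivity.
Qed.

Lemma mul_idem_one a : gmul a a = a -> a = gone.
Proof. intro E. apply (mul_left_cancel a). rewrite gmul1r. exact E. Qed.

Lemma inv_unique a b : gmul a b = gone -> b = ginv a.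
Proof. intro E. apply (mul_left_cancel a). rewrite gmulVr. exact E. Qed.

Lemma inv_one : ginv (gone : G) = gone.
Proof. symmetry. apply inv_unique, gmul1l. Qed.

End GroupLaws.

Definition hom (G G' : group) (f : G -> G') : Prop :=
  forall x y, f (gmul x y) = gmul (f x) (f y).

Section Homomorphism.
Variables (G G' : group) (f : G -> G').
Hypothesis f_hom : hom G G' f.

Lemma hom_one : f gone = gone.
Proof. apply mul_idem_one. rewrite <- f_hom, gmul1l. reflexivity. Qed.

Lemma hom_inv x : f (ginv x) = ginv (f x).
Proof. apply inv_unique. rewrite <- f_hom, gmulVr. exact hom_one. Qed.

Lemma kernel_subgroup : is_subgroup G (fun x => f x = gone).
Proof.
  split; [exact hom_one | split].
  - intros x y Ex Ey. rewrite f_hom, Ex, Ey. apply gmul1l.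
  - intros x Ex. rewrite hom_inv, Ex. apply inv_one.
Qed.

End Homomorphism.

Lemma isomorphic_sym (G G' : group) : isomorphic G G' -> isomorphic G' G.
Proof.
  intros [f [f_hom [f_inj f_surj]]].
  pose (g y := proj1_sig (constructive_indefinite_description _ (f_surj y))).
  assert (fgK : forall y, f (g y) = y)
    by (intro y; exact (proj2_sig (constructive_indefinite_description _ (f_surj y)))).
  exists g. split; [| split].
  - intros x y. apply f_inj. rewrite f_hom, !fgK. reflexivity.
  - intros x y E. rewrite <- (fgK x), <- (fgK y), E. reflexivity.
  - intro x. exists (f x). apply f_inj, fgK.
Qed.

Section SubgroupAsGroup.
Variables (G : group) (H : G -> Prop).
Hypothesis H_sub : is_subgroup G H.

Lemma sig_eq (a b : {x : G | H x}) : proj1_sig a = proj1_sig b -> a = b.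
Proof. destruct a, b; simpl; intro E; subst. f_equal. apply proof_irrelevance. Qed.

Definition sub_mul (a b : {x : G | H x}) : {x : G | H x} :=
  exist _ (gmul (proj1_sig a) (proj1_sig b))
    (proj1 (proj2 H_sub) _ _ (proj2_sig a) (proj2_sig b)).

Definition sub_one : {x : G | H x} := exist _ gone (proj1 H_sub).

Definition sub_inv (a : {x : G | H x}) : {x : G | H x} :=
  exist _ (ginv (proj1_sig a)) (proj2 (proj2 H_sub) _ (proj2_sig a)).

Definition sub_group : group.
Proof.
  refine (Group {x : G | H x} sub_mul sub_one sub_inv _ _ _ _ _);
    intros; apply sig_eq; simpl.
  - apply gmulA.
  - apply gmul1l.
  - apply gmul1r.
  - apply gmulVl.
  - apply gmulVr.
Defined.

Lemma sub_group_trivial : trivial_group sub_group -> trivial_subgroup G H.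
Proof. intros T x Hx. exact (f_equal (@proj1_sig _ _) (T (exist H x Hx))). Qed.

End SubgroupAsGroup.

Definition center (G : group) (z : G) : Prop := forall g : G, gmul z g = gmul g z.

Lemma center_subgroup (G : group) : is_subgroup G (center G).
Proof.
  split; [| split].
  - intro g. rewrite gmul1l, gmul1r. reflexivity.
  - intros x y Zx Zy g. rewrite <- gmulA, Zy, gmulA, Zx, gmulA. reflexivity.
  - intros x Zx g. apply (mul_left_cancel _ x).
    rewrite gmulA, gmulVr, gmul1l, gmulA, Zx, <- gmulA, gmulVr, gmul1r.
    reflexivity.
Qed.

Lemma full_subgroup (G : group) : is_subgroup G (fun _ => True).
Proof. repeat split. Qed.

Lemma unfactorizable_centerless (G : group) : unfactorizable G -> centerless G.
Proof.
  intros U z Zz.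
  destruct (U (center G) (fun _ => True) (center_subgroup G) (full_subgroup G))
    as [T | T].
  - intro g. exists gone, g. split; [apply center_subgroup | split; [exact I |]].
    rewrite gmul1l. reflexivity.
  - intros h k Zh _. apply Zh.
  - exact (T z Zz).
  - exact (T z I).
Qed.

Section ProductPreimages.
Variables (G H K : group) (f : G -> prod_group H K).
Hypotheses (f_hom : hom _ _ f) (f_inj : forall x y, f x = f y -> x = y)
  (f_surj : forall p, exists x, f x = p).

Let fst_f_hom : hom G H (fun x => fst (f x)) := fun x y => f_equal fst (f_hom x y).
Let snd_f_hom : hom G K (fun x => snd (f x)) := fun x y => f_equal snd (f_hom x y).

Lemma preimage_left_subgroup : is_subgroup G (fun x => snd (f x) = gone).
Proof. exact (kernel_subgroup _ _ _ snd_f_hom). Qed.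

Lemma preimage_right_subgroup : is_subgroup G (fun x => fst (f x) = gone).
Proof. exact (kernel_subgroup _ _ _ fst_f_hom). Qed.

Lemma preimages_cover (g : G) :
  exists h k, snd (f h) = gone /\ fst (f k) = gone /\ g = gmul h k.
Proof.
  destruct (f g) as [a b] eqn:Eg.
  destruct (f_surj (a, gone)) as [h Eh], (f_surj (gone, b)) as [k Ek].
  exists h, k. rewrite Eh, Ek. split; [reflexivity | split; [reflexivity |]].
  apply f_inj. rewrite f_hom, Eh, Ek, Eg. simpl. unfold pmul. simpl. rewrite gmul1r, gmul1l. reflexivity.
Qed.

Lemma preimages_commute (h k : G) :
  snd (f h) = gone -> fst (f k) = gone -> gmul h k = gmul k h.
Proof.
  intros Eh Ek. apply f_inj. rewrite !f_hom.
  destruct (f h) as [a1 b1], (f k) as [a2 b2]. cbn in *. subst.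
  unfold pmul. cbn. rewrite !gmul1l, !gmul1r. reflexivity.
Qed.

Lemma preimage_left_trivial :
  trivial_subgroup G (fun x => snd (f x) = gone) -> trivial_group H.
Proof.
  intros T a. destruct (f_surj (a, gone)) as [x Ex].
  assert (x = gone) as -> by (apply T; rewrite Ex; reflexivity).
  rewrite (hom_one _ _ _ f_hom) in Ex. injection Ex; auto.
Qed.

Lemma preimage_right_trivial :
  trivial_subgroup G (fun x => fst (f x) = gone) -> trivial_group K.
Proof.
  intros T b. destruct (f_surj (gone, b)) as [x Ex].
  assert (x = gone) as -> by (apply T; rewrite Ex; reflexivity).
  rewrite (hom_one _ _ _ f_hom) in Ex. injection Ex; auto.
Qed.

End ProductPreimages.

Lemma unfactorizable_indecomposable (G : group) :
  unfactorizable G -> indecomposable G.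
Proof.
  intros U H K [f [f_hom [f_inj f_surj]]].
  destruct (U _ _ (preimage_left_subgroup _ _ _ f f_hom)
                  (preimage_right_subgroup _ _ _ f f_hom)
                  (preimages_cover _ _ _ f f_hom f_inj f_surj)
                  (preimages_commute _ _ _ f f_hom f_inj)) as [T | T].
  - left. exact (preimage_left_trivial _ _ _ f f_hom f_surj T).
  - right. exact (preimage_right_trivial _ _ _ f f_hom f_surj T).
Qed.

Section CommutingFactorization.
Variables (G : group) (H K : G -> Prop).
Hypotheses (H_sub : is_subgroup G H) (K_sub : is_subgroup G K)
  (HK_cover : forall g : G, exists h k, H h /\ K k /\ g = gmul h k)
  (HK_commute : forall h k, H h -> K k -> gmul h k = gmul k h).

Lemma factors_meet_central x : H x -> K x -> center G x.
Proof.
  intros Hx Kx g. destruct (HK_cover g) as [h [k [Hh [Hk ->]]]].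
  rewrite gmulA, <- (HK_commute h x Hh Kx), <- !gmulA, (HK_commute x k Hx Hk).
  reflexivity.
Qed.

Hypothesis G_centerless : centerless G.

Definition mul_factors (p : prod_group (sub_group G H H_sub) (sub_group G K K_sub)) : G :=
  gmul (proj1_sig (fst p)) (proj1_sig (snd p)).

Lemma mul_factors_hom : hom _ _ mul_factors.
Proof.
  intros [[h1 Hh1] [k1 Hk1]] [[h2 Hh2] [k2 Hk2]]. unfold mul_factors. cbn.
  rewrite <- !gmulA. f_equal. rewrite !gmulA. f_equal. apply HK_commute; assumption.
Qed.

Lemma mul_factors_injective p q : mul_factors p = mul_factors q -> p = q.
Proof.
  destruct p as [[h Hh] [k Hk]], q as [[h' Hh'] [k' Hk']]. unfold mul_factors. cbn.
  intro E.
  assert (Q : gmul (ginv h') h = gmul k' (ginv k)).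
  { apply (mul_right_cancel _ k).
    rewrite <- !gmulA, gmulVl, gmul1r, E, gmulA, gmulVl, gmul1l. reflexivity. }
  assert (Q1 : gmul (ginv h') h = gone).
  { apply G_centerless, factors_meet_central.
    - apply H_sub; [apply H_sub |]; assumption.
    - rewrite Q. apply K_sub; [| apply K_sub]; assumption. }
  assert (h = h') as Eh.
  { apply (mul_left_cancel _ (ginv h')). rewrite Q1, gmulVl. reflexivity. }
  subst h'. apply (mul_left_cancel _ h) in E.
  subst k'. f_equal; apply sig_eq; reflexivity.
Qed.

Lemma mul_factors_surjective g : exists p, mul_factors p = g.
Proof.
  destruct (HK_cover g) as [h [k [Hh [Hk ->]]]].
  exists ((exist H h Hh, exist K k Hk) : prod_group (sub_group G H H_sub) (sub_group G K K_sub)).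
  reflexivity.
Qed.

Lemma centerless_commuting_factors_iso :
  isomorphic G (prod_group (sub_group G H H_sub) (sub_group G K K_sub)).
Proof.
  apply isomorphic_sym. exists mul_factors.
  exact (conj mul_factors_hom (conj mul_factors_injective mul_factors_surjective)).
Qed.

End CommutingFactorization.

Lemma centerless_indecomposable_unfactorizable (G : group) :
  centerless G -> indecomposable G -> unfactorizable G.
Proof.
  intros C I H K H_sub K_sub cover commute.
  destruct (I _ _ (centerless_commuting_factors_iso G H K H_sub K_sub cover commute C))
    as [T | T].
  - left. exact (sub_group_trivial _ _ _ T).
  - right. exact (sub_group_trivial _ _ _ T).
Qed.

Theorem lemma2p3 (G : group) :
  unfactorizable G <-> (centerless G /\ indecomposable G).
Proof.
  split.
  - intro U. split.
    + exact (unfactorizable_centerless G U).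
    + exact (unfactorizable_indecomposable G U).
  - intros [C I]. exact (centerless_indecomposable_unfactorizable G C I).
Qed.
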